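(* Let $n\ge1$, $k\ge1$, $A\in\{1,\dots,n\}^k$ and $B\subset\{1,\dots,n\}$ with $|B|=k+1$. Let $\tilde A=c^{1-\rho(A,B)}A$, $\tilde B=c^{1-\rho(A,B)}B$, let $I=(i_1\le\dots\le i_k)$ be the non-decreasing rearrangement of $\tilde A$, and $(j_1,\dots,j_k)=\Pi(I,\tilde B)$. Then $i_l<j_l$ for all $l$ and the chain of transpositions $((i_1\,j_1),\dots,(i_k\,j_k))$ belongs to $\Sigma^*_n(k)$.
   Context: $\mathfrak S_n$ is the symmetric group on $\{1,\dots,n\}$; products are composed right to left. $\mathsf T_n$ is the set of transpositions, always written $(i\,j)$ with $i<j$. For $\sigma\in\mathfrak S_n$, $|\sigma|=n-(\text{number of cycles of }\sigma\text{, fixed points counted})$; $\sigma_1\preccurlyeq\sigma_2$ iff $|\sigma_2|=|\sigma_1|+|\sigma_1^{-1}\sigma_2|$. $\Sigma_n(k)=\{(\tau_1,\dots,\tau_k)\in(\mathsf T_n)^k : |\tau_1\cdots\tau_k|=k,\ \tau_1\cdots\tau_k\preccurlyeq(1\,2\,\dots\,n)\}$, and $\Sigma^*_n(k)$ is the set of its elements $((i_1\,j_1),\dots,(i_k\,j_k))$ with $i_1\le\dots\le i_k$. Let $c=(1\,2\,\dots\,n)$ be the cyclic shift $x\mapsto x+1$ for $x<n$, $n\mapsto1$, acting componentwise on sequences and elementwise on sets; powers are taken modulo $n$. Parking process: given $E=(e_1,\dots,e_k)\in\{1,\dots,n\}^k$ and $O\subset\{1,\dots,n\}$ with $|O|=k+1$,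 define $p_k=c^{r}(e_k)$ where $r=\min\{s\in\{1,\dots,n\}: c^s(e_k)\in O\}$ and, backwards, $p_l=c^{r}(e_l)$ where $r=\min\{s\in\{1,\dots,n\}: c^s(e_l)\in O\setminus\{p_{l+1},\dots,p_k\}\}$. Write $\Pi(E,O)=(p_1,\dots,p_k)$; the unique element of $O\setminus\{p_1,\dots,p_k\}$ is the residue $\rho(E,O)$. *)

From mathcomp Require Import all_boot all_order all_fingroup.
Set Implicit Arguments. Unset Strict Implicit. Unset Printing Implicit Defensive.

(* Convention: points of {1,...,n} are natural numbers in [1,n]; as elements
   of 'I_n (on which permutations act) the point x is the ordinal x-1. *)

Definition transp (n i j : nat) : {perm 'I_n} :=
  match n return {perm 'I_n} with
  | 0 => 1%g
  | m.+1 => tperm (inord i.-1 : 'I_m.+1) (inord j.-1)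
  end.

(* The full cycle c = (1 2 ... n): x -> x+1 (x<n), n -> 1. *)
Definition fullcycle (n : nat) : {perm 'I_n} := perm (@ordS_inj n).

Definition plen (n : nat) (s : {perm 'I_n}) : nat := n - #|porbits s|.

(* s1 <= s2 iff |s2| = |s1| + |s1^{-1} s2| ; products composed right to left,
   so the function s1^{-1} o s2 is the mathcomp product (s2 * s1^-1)%g. *)
Definition pleq (n : nat) (s1 s2 : {perm 'I_n}) : bool :=
  plen s2 == plen s1 + plen (s2 * s1^-1)%g.

(* Right-to-left product tau_1 ... tau_k (tau_k applied first). *)
Definition prodT (n : nat) (ts : seq (nat * nat)) : {perm 'I_n} :=
  foldr (fun t acc => (acc * transp n t.1 t.2)%g) 1%g ts.

Definition is_transp (n : nat) (t : nat * nat) : bool :=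
  (1 <= t.1) && (t.1 < t.2) && (t.2 <= n).

Definition Sigma (n k : nat) (ts : seq (nat * nat)) : bool :=
  [&& size ts == k, all (is_transp n) ts,
      plen (prodT n ts) == k & pleq (prodT n ts) (fullcycle n)].

Definition SigmaStar (n k : nat) (ts : seq (nat * nat)) : bool :=
  Sigma n k ts && sorted leq (map fst ts).

Definition cshift (n s x : nat) : nat := (x.-1 + s) %% n + 1.

(* one parking step: r = min {s in 1..n | c^s e in O}, p = c^r e *)
Definition park1 (n e : nat) (O : seq nat) : nat :=
  cshift n (find (fun s => cshift n s.+1 e \in O) (iota 0 n)).+1 e.

Fixpoint parkr (n : nat) (es : seq nat) (O : seq nat) : seq nat :=
  match es with
  | [::] => [::]
  | e :: es' => let p := park1 n e O in p :: parkr n es' (rem p O)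
  end.

Definition Park (n : nat) (E O : seq nat) : seq nat := rev (parkr n (rev E) O).

Definition residue (n : nat) (E O : seq nat) : nat :=
  head 0 [seq x <- O | x \notin Park n E O].

Definition in_range (n x : nat) : bool := (1 <= x) && (x <= n).

From mathcomp Require Import all_boot all_order all_fingroup.
From mathcomp Require Import zify.
Set Implicit Arguments. Unset Strict Implicit. Unset Printing Implicit Defensive.

(* Points of the circle {1..n} are compared through the circular distance
   [cdist n e z], the number of spots passed when driving from e to z; a car
   arriving at e parks at the spot of O with the smallest such distance.
   Three facts about the parking process are established first:
   - it commutes with the rotation c (Park_cshift);
   - the multiset of occupied spots does not depend on the order in which the
     cars arrive (parkr_perm, proved by swapping two consecutive cars);
   - hence the residue of the rotated data is the rotated residue, so after the
     rotation c^(1-rho) the spot 1 stays free (Park_avoids_residue).  When 1 is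
     free, no car drives past n, so every car parks at a larger spot and the
     resulting arcs (i_l, j_l] do not interleave (Park_noncrossing).
   On the permutation side, a chain of transpositions sorted by first entry
   with non-interleaving arcs multiplies (right to left) to a permutation with
   n - k cycles, and its quotient by c has k + 1 cycles (porbits_prodT,
   porbits_prodT_cycle); this is exactly membership in Sigma*_n(k). *)

Lemma pairwise_rev T (r : rel T) s : pairwise r (rev s) = pairwise (fun x y => r y x) s.
Proof.
elim: s => //= x s IH.
by rewrite rev_cons pairwise_rcons IH all_rev andbC.
Qed.

Lemma exists_other (O : seq nat) x : uniq O -> 1 < size O -> exists2 z, z \in O & z != x.
Proof.
case: O => [|a [|b O]] //= /andP[]; rewrite inE negb_or => /andP[ab _] _ _.
have [ax|] := eqVneq a x; last by exists a; rewrite ?mem_head.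
by exists b; rewrite ?inE ?eqxx ?orbT // -ax eq_sym.
Qed.

Lemma modn_sub_once a n : n <= a < n + n -> a %% n = a - n.
Proof. by move=> /andP[na an]; rewrite -{1}(subnK na) modnDr modn_small; lia. Qed.

(* Circular distance: the unique s < n such that c^(s+1) e = z. *)
Definition cdist (n e z : nat) : nat := if e < z then z - e - 1 else z + n - e - 1.

Section Circle.

Variable n : nat.

Lemma cshift_in_range s x : 0 < n -> in_range n (cshift n s x).
Proof. by move=> n_gt0; rewrite /in_range /cshift; have := ltn_pmod (x.-1 + s) n_gt0; lia. Qed.

Lemma cshiftD a b x : cshift n a (cshift n b x) = cshift n (b + a) x.
Proof. by rewrite /cshift !addn1 /= modnDml addnA. Qed.

Lemma cshift_inj s y z : in_range n y -> in_range n z ->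
  cshift n s y = cshift n s z -> y = z.
Proof.
rewrite /in_range /cshift => /andP[y1 yn] /andP[z1 zn] /eqP.
rewrite eqn_add2r eqn_modDr !modn_small; [move/eqP; lia | lia | lia].
Qed.

Lemma cshift_cdist e z : in_range n e -> in_range n z ->
  cshift n (cdist n e z).+1 e = z.
Proof.
rewrite /in_range /cshift /cdist => /andP[e1 en] /andP[z1 zn].
by case: ltnP => ez; [rewrite modn_small | rewrite modn_sub_once]; lia.
Qed.

Lemma cdist_cshift e s : in_range n e -> s < n -> cdist n e (cshift n s.+1 e) = s.
Proof.
rewrite /in_range /cshift /cdist => /andP[e1 en] sn.
case: (ltnP (e + s) n) => es.
  by rewrite modn_small; [case: ifP|]; lia.
by rewrite modn_sub_once; [case: ifP|]; lia.
Qed.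

Lemma cdist_lt e z : in_range n e -> in_range n z -> cdist n e z < n.
Proof. by rewrite /in_range /cdist => /andP[e1 en] /andP[z1 zn]; case: ifP; lia. Qed.

Lemma cdist_inj e z z' : in_range n e -> in_range n z -> in_range n z' ->
  cdist n e z = cdist n e z' -> z = z'.
Proof. by move=> re rz rz' ezz; rewrite -(cshift_cdist re rz) ezz cshift_cdist. Qed.

Lemma cdist_shift_origin e x z : in_range n e -> in_range n x -> in_range n z ->
  cdist n e x < cdist n e z -> cdist n x z = cdist n e z - cdist n e x - 1.
Proof.
rewrite /in_range /cdist => /andP[e1 en] /andP[x1 xn] /andP[z1 zn].
by do 3 case: ifP; lia.
Qed.

Lemma cshift_to_one r : in_range n r -> cshift n (n + 1 - r) r = 1.
Proof.
rewrite /in_range /cshift => /andP[r1 rn].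
have -> : r.-1 + (n + 1 - r) = n by lia.
by rewrite modnn.
Qed.

End Circle.

Section Parking.

Variable n : nat.
Hypothesis n_gt0 : 0 < n.

Lemma park1_spec e O z0 : in_range n e -> z0 \in O -> in_range n z0 ->
  [/\ park1 n e O \in O, in_range n (park1 n e O) &
      forall z, z \in O -> in_range n z -> cdist n e (park1 n e O) <= cdist n e z].
Proof.
move=> re z0O rz0.
set P := (fun s => cshift n s.+1 e \in O).
have Pcdist z : z \in O -> in_range n z -> P (cdist n e z).
  by move=> zO rz; rewrite /P cshift_cdist.
have hasP : has P (iota 0 n).
  by apply/hasP; exists (cdist n e z0); rewrite ?mem_iota ?cdist_lt ?Pcdist.
have found := nth_find 0 hasP; move: hasP; rewrite has_find size_iota => found_lt.
rewrite nth_iota // add0n in found.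
rewrite /park1 -/P; split => //; first exact: cshift_in_range n_gt0.
move=> z zO rz; rewrite cdist_cshift //.
rewrite leqNgt; apply/negP => z_before.
have := before_find 0 z_before; rewrite nth_iota ?add0n ?Pcdist //.
exact: ltn_trans z_before found_lt.
Qed.

Lemma park1_unique e O p : in_range n e -> p \in O -> in_range n p ->
  (forall z, z \in O -> in_range n z -> cdist n e p <= cdist n e z) -> park1 n e O = p.
Proof.
move=> re pO rp pmin; have [qO rq qmin] := park1_spec re pO rp.
by apply: (cdist_inj re rq rp); apply/eqP; rewrite eqn_leq qmin ?pmin.
Qed.

Lemma park1_eq_mem e O O' : O =i O' -> park1 n e O = park1 n e O'.
Proof.
by move=> OO'; rewrite /park1; congr (cshift _ _.+1 _); apply: eq_find => s; rewrite OO'.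
Qed.

Lemma park1_mem e O : in_range n e -> all (in_range n) O -> O != [::] ->
  park1 n e O \in O.
Proof.
case: O => // o O re rO _.
by have [] := park1_spec re (mem_head o O) (allP rO _ (mem_head o O)).
Qed.

Lemma mem_map_cshift s w O : in_range n w -> all (in_range n) O ->
  (cshift n s w \in map (cshift n s) O) = (w \in O).
Proof.
move=> rw rO; apply/mapP/idP => [[y yO /(cshift_inj rw (allP rO y yO)) ->] //|wO].
by exists w.
Qed.

Lemma map_cshift_uniq s O : all (in_range n) O -> uniq O -> uniq (map (cshift n s) O).
Proof.
move=> rO uO; rewrite map_inj_in_uniq // => y z yO zO.
exact: cshift_inj (allP rO y yO) (allP rO z zO).
Qed.

Lemma map_cshift_in_range s O : all (in_range n) (map (cshift n s) O).
Proof. by apply/allP => _ /mapP[y _ ->]; apply: cshift_in_range. Qed.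

Lemma park1_cshift s e O : all (in_range n) O ->
  park1 n (cshift n s e) (map (cshift n s) O) = cshift n s (park1 n e O).
Proof.
move=> rO; rewrite /park1.
have same_search : (fun s' => cshift n s'.+1 (cshift n s e) \in map (cshift n s) O)
   =1 (fun s' => cshift n s'.+1 e \in O).
  by move=> s' /=; rewrite cshiftD addnC -cshiftD mem_map_cshift ?cshift_in_range.
by rewrite (eq_find same_search) cshiftD addnC -cshiftD.
Qed.

Lemma park1_after_taken e O x z0 : in_range n e -> uniq O -> all (in_range n) O ->
  park1 n e O = x -> z0 \in O -> z0 != x ->
  park1 n e (rem x O) = park1 n x (rem x O).
Proof.
move=> re uO rO ex z0O z0x.
have [] := park1_spec re z0O (allP rO _ z0O); rewrite ex => xO rx xmin.
have z0O' : z0 \in rem x O by rewrite mem_rem_uniq // inE z0x.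
have [wO rw wmin] := park1_spec rx z0O' (allP rO _ z0O).
apply: park1_unique => // z zO rz.
have after_x u : u \in rem x O -> in_range n u -> cdist n e x < cdist n e u.
  rewrite mem_rem_uniq // inE => /andP[ux u_in] ru.
  rewrite ltn_neqAle xmin // andbT; apply: contra ux => /eqP exu.
  by apply/eqP; apply: (cdist_inj re ru rx).
have := wmin z zO rz; rewrite !(cdist_shift_origin re rx) ?after_x // -!subnDA addn1.
by rewrite leq_sub2rE // after_x.
Qed.

Lemma size_parkr es O : size (parkr n es O) = size es.
Proof. by elim: es O => //= e es IH O; rewrite IH. Qed.

Lemma parkr_in_range es O : all (in_range n) (parkr n es O).
Proof. by elim: es O => //= e es IH O; rewrite IH cshift_in_range. Qed.

Lemma parkr_eq_mem es O O' : uniq O -> uniq O' -> O =i O' ->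
  parkr n es O = parkr n es O'.
Proof.
elim: es O O' => //= e es IH O O' uO uO' OO'.
rewrite (park1_eq_mem e OO'); congr (_ :: _); apply: IH; rewrite ?rem_uniq //.
by move=> z; rewrite !mem_rem_uniq // !inE OO'.
Qed.

Lemma rem_map_cshift s p O : in_range n p -> all (in_range n) O ->
  rem (cshift n s p) (map (cshift n s) O) = map (cshift n s) (rem p O).
Proof.
move=> rp; elim: O => //= y O IH /andP[ry rO].
have [->|yp] := eqVneq y p; first by rewrite eqxx.
rewrite IH //; case: eqP => // /(cshift_inj ry rp) yp'.
by rewrite yp' eqxx in yp.
Qed.

Lemma parkr_cshift s es O : all (in_range n) O ->
  parkr n (map (cshift n s) es) (map (cshift n s) O) = map (cshift n s) (parkr n es O).
Proof.
elim: es O => //= e es IH O rO.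
rewrite park1_cshift // rem_map_cshift ?cshift_in_range // IH //.
by apply/allP => z /mem_rem; apply: (allP rO).
Qed.

Lemma parkr_swap a b es O : in_range n a -> in_range n b ->
  uniq O -> all (in_range n) O -> 1 < size O ->
  perm_eq (parkr n (a :: b :: es) O) (parkr n (b :: a :: es) O).
Proof.
move=> ra rb uO rO sO /=.
have [o oO] : exists o, o \in O by exists (nth 0 O 0); apply: mem_nth; lia.
have [xO rx xmin] := park1_spec ra oO (allP rO _ oO).
have [yO ry ymin] := park1_spec rb oO (allP rO _ oO).
set x := park1 n a O in xO rx xmin *; set y := park1 n b O in yO ry ymin *.
have [exy|nxy] := eqVneq x y.
  have [z zO zx] := exists_other x uO sO.
  rewrite (park1_after_taken rb uO rO (esym exy) zO zx) -exy.
  by rewrite (park1_after_taken ra uO rO (erefl x) zO zx).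
have -> : park1 n b (rem x O) = y.
  apply: park1_unique => //; first by rewrite mem_rem_uniq // inE yO andbT eq_sym.
  by move=> z /mem_rem zO rz; apply: ymin.
have -> : park1 n a (rem y O) = x.
  apply: park1_unique => //; first by rewrite mem_rem_uniq // inE xO andbT.
  by move=> z /mem_rem zO rz; apply: xmin.
rewrite (@parkr_eq_mem es (rem y (rem x O)) (rem x (rem y O))) ?rem_uniq //.
  by rewrite -[x :: _]cat1s -[y :: _]cat1s -[y :: _]cat1s -[x :: parkr _ _ _]cat1s perm_catCA.
by move=> z; rewrite !mem_rem_uniq ?rem_uniq // !inE !mem_rem_uniq // !inE andbCA.
Qed.

Lemma parkr_move u a v O : all (in_range n) u -> in_range n a ->
  uniq O -> all (in_range n) O -> size (u ++ a :: v) < size O ->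
  perm_eq (parkr n (u ++ a :: v) O) (parkr n (a :: u ++ v) O).
Proof.
elim: u O => [|b u IH] O; first by rewrite perm_refl.
rewrite /= size_cat /= => /andP[rb ru] ra uO rO sO.
have pO : park1 n b O \in O by apply: park1_mem => //; case: O sO {uO rO}.
apply: (perm_trans (y := parkr n (b :: a :: u ++ v) O)); last by apply: parkr_swap => //; apply: leq_trans sO.
rewrite /= perm_cons IH ?rem_uniq ?size_rem ?size_cat ?ltn_predRL //=.
by apply/allP => z /mem_rem; apply: (allP rO).
Qed.

Lemma parkr_perm es es' O : all (in_range n) es ->
  uniq O -> all (in_range n) O -> size es < size O -> perm_eq es es' ->
  perm_eq (parkr n es O) (parkr n es' O).
Proof.
elim: es es' O => [|a es IH] es' O; first by move=> _ _ _ _ /perm_size; case: es'.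
move=> /= /andP[ra res] uO rO sO esP.
have a_in : a \in es' by rewrite -(perm_mem esP) mem_head.
case/splitPr: a_in esP => u v esP.
have es_uv : perm_eq es (u ++ v).
  by rewrite -(perm_cons a); apply: (perm_trans esP); rewrite -cat1s perm_catCA.
have r_uav : all (in_range n) (u ++ a :: v) by rewrite -(perm_all _ esP) /= ra res.
have pO : park1 n a O \in O by apply: park1_mem => //; case: O sO {uO rO}.
apply: (perm_trans (y := parkr n (a :: u ++ v) O)); last first.
  rewrite perm_sym parkr_move -?(perm_size esP) //.
  by move: r_uav; rewrite all_cat => /andP[].
rewrite /= perm_cons IH ?rem_uniq ?size_rem ?ltn_predRL //.
by apply/allP => z /mem_rem; apply: (allP rO).
Qed.

Lemma size_Park E O : size (Park n E O) = size E.
Proof. by rewrite /Park size_rev size_parkr size_rev. Qed.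

Lemma Park_in_range E O : all (in_range n) (Park n E O).
Proof. by rewrite /Park all_rev parkr_in_range. Qed.

Lemma Park_perm E E' O : all (in_range n) E ->
  uniq O -> all (in_range n) O -> size E < size O -> perm_eq E E' ->
  perm_eq (Park n E O) (Park n E' O).
Proof.
move=> rE uO rO sEO EE'; rewrite /Park perm_rev perm_sym perm_rev perm_sym.
by apply: parkr_perm; rewrite ?all_rev ?size_rev // perm_rev perm_sym perm_rev perm_sym.
Qed.

Lemma Park_cshift s E O : all (in_range n) O ->
  Park n (map (cshift n s) E) (map (cshift n s) O) = map (cshift n s) (Park n E O).
Proof. by move=> rO; rewrite /Park -map_rev parkr_cshift // map_rev. Qed.

Lemma residue_spec E O : uniq O -> size O = (size E).+1 ->
  residue n E O \in O /\ residue n E O \notin Park n E O.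
Proof.
move=> uO sO.
have free_spot : has (fun x => x \notin Park n E O) O.
  apply/negPn/negP; rewrite -all_predC => /allP taken.
  have : size O <= size (Park n E O).
    by apply: uniq_leq_size => // x /taken /negbNE.
  by rewrite sO size_Park ltnn.
suff : residue n E O \in [seq x <- O | x \notin Park n E O] by rewrite mem_filter => /andP[].
by move: free_spot; rewrite has_filter /residue; case: [seq x <- O | _] => // x s _; apply: mem_head.
Qed.

Lemma Park_avoids_residue s A I B : all (in_range n) A ->
  uniq B -> all (in_range n) B -> size B = (size A).+1 ->
  perm_eq I (map (cshift n s) A) ->
  cshift n s (residue n A B) \notin Park n I (map (cshift n s) B).
Proof.
move=> rA uB rB sB IA; have [rhoB rho_free] := residue_spec uB sB.
have rI : all (in_range n) I by rewrite (perm_all _ IA) map_cshift_in_range.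
rewrite (perm_mem (Park_perm rI _ _ _ IA)) ?map_cshift_uniq ?map_cshift_in_range //;
  last by rewrite (perm_size IA) !size_map sB.
by rewrite Park_cshift // mem_map_cshift ?Park_in_range ?(allP rB).
Qed.

Definition outside (a b : nat * nat) : bool := ~~ (b.1 < a.2 <= b.2).

Let in_range1 : in_range n 1 := n_gt0.

(* If spot 1 is available but not taken, the car does not drive past n: it
   parks at a larger spot and passes no spot of O on the way. *)
Lemma park1_forward e O : in_range n e -> all (in_range n) O -> 1 \in O ->
  park1 n e O != 1 ->
  e < park1 n e O /\ forall z, z \in O -> ~~ (e < z < park1 n e O).
Proof.
move=> re rO O1 p1; have [pO rp pmin] := park1_spec re O1 in_range1.
set p := park1 n e O in p1 pO rp pmin *.
have ep : e < p.
  have := pmin 1 O1 in_range1; move: re rp p1; rewrite /in_range /cdist.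
  by move=> /andP[? ?] /andP[? ?] /eqP; do 2 case: ifP; lia.
split => // z zO; apply/negP => /andP[ez zp].
by have := pmin z zO (allP rO _ zO); rewrite /cdist ep ez; lia.
Qed.

Lemma parkr_noncrossing es O : all (in_range n) es ->
  uniq O -> all (in_range n) O -> 1 \in O -> 1 \notin parkr n es O ->
  all (fun q => is_transp n q && (q.2 \in O)) (zip es (parkr n es O)) &&
  pairwise (fun a b => outside b a) (zip es (parkr n es O)).
Proof.
elim: es O => [|e es IH] O //= /andP[re res] uO rO O1.
rewrite inE negb_or eq_sym => /andP[p1 rest1].
have [ep passed] := park1_forward re rO O1 p1.
have [pO rp _] := park1_spec re O1 in_range1.
set p := park1 n e O in p1 rest1 ep passed pO rp *.
have O1' : 1 \in rem p O by rewrite mem_rem_uniq // inE eq_sym p1.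
have rO' : all (in_range n) (rem p O) by apply/allP => z /mem_rem; apply: (allP rO).
have /andP[fwd nc] := IH (rem p O) res (rem_uniq _ uO) rO' O1' rest1.
have tp : is_transp n (e, p).
  by move: re rp; rewrite /in_range /is_transp /= ep => /andP[-> _] /andP[_ ->].
rewrite tp pO nc /= andbT; apply/andP; split.
  by apply: sub_all fwd => -[a b] /= /andP[-> /mem_rem ->].
apply: sub_all fwd => -[a b] /= /andP[_]; rewrite mem_rem_uniq // inE => /andP[bp bO].
by rewrite /outside /= (leq_eqVlt b) (negbTE bp); apply: passed.
Qed.

Lemma Park_noncrossing E O : all (in_range n) E ->
  uniq O -> all (in_range n) O -> 1 \in O -> 1 \notin Park n E O ->
  all (is_transp n) (zip E (Park n E O)) && pairwise outside (zip E (Park n E O)).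
Proof.
move=> rE uO rO O1; rewrite /Park mem_rev => free1.
have rE' : all (in_range n) (rev E) by rewrite all_rev.
have /andP[fwd nc] := parkr_noncrossing rE' uO rO O1 free1.
have -> : zip E (rev (parkr n (rev E) O)) = rev (zip (rev E) (parkr n (rev E) O)).
  by rewrite rev_zip ?revK // size_parkr.
rewrite all_rev pairwise_rev nc andbT.
by apply: sub_all fwd => q /andP[].
Qed.

End Parking.

Section Cycles.

Variable m : nat.
Local Notation n := m.+1.
Local Notation c := (fullcycle n).

Lemma transpE i j : transp n i j = tperm (inord i.-1 : 'I_n) (inord j.-1).
Proof. by []. Qed.

Lemma prodT_rcons ts t : prodT n (rcons ts t) = (transp n t.1 t.2 * prodT n ts)%g.
Proof.
rewrite /prodT -cats1 foldr_cat /= mul1g.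
by elim: ts => [|u ts IH] /=; rewrite ?mulg1 ?IH ?mulgA.
Qed.

(* A product of transpositions (i', j') with i' <= i and j' outside (i, j]
   fixes the points i+1, ..., j, i.e. the ordinals w with i <= w < j. *)
Lemma prodT_fix_interval ts i j (w : 'I_n) : all (is_transp n) ts ->
  all (fun t => t.1 <= i) ts -> all (outside^~ (i, j)) ts -> i <= w < j ->
  prodT n ts w = w.
Proof.
move=> + + + /andP[iw wj]; elim: ts => [|[i' j'] ts IH] /=; first by rewrite perm1.
move=> /andP[/andP[/andP[/= i1' ij'] jn'] allT] /andP[le_i' le_i] /andP[out' out].
rewrite permM IH // tpermD //; apply/eqP => /(congr1 val) /=;
  by rewrite inordK; move: out'; rewrite /outside /=; lia.
Qed.

Lemma porbits1 : #|porbits (1 : {perm 'I_n})| = n.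
Proof.
have single : porbit (1 : {perm 'I_n}) =1 (fun x => [set x]).
  move=> x; apply/setP => y; rewrite inE; apply/porbitP/eqP => [[i ->]|->].
    by rewrite expg1n perm1.
  by exists 0; rewrite expg0 perm1.
by rewrite /porbits (eq_imset _ single) card_imset ?card_ord //; apply: set1_inj.
Qed.

Lemma porbits_gt0 (s : {perm 'I_n}) : 0 < #|porbits s|.
Proof. by apply/card_gt0P; exists (porbit s ord0); apply: imset_f. Qed.

Lemma fullcycleE (x : 'I_n) : c x = ordS x.
Proof. by rewrite /fullcycle permE. Qed.

Lemma fullcycleX_ord0 r : r <= m -> (c ^+ r)%g ord0 = inord r.
Proof.
elim: r => [|r IH] r_le; first by rewrite expg0 perm1; apply: val_inj; rewrite /= inordK.
rewrite expgSr permM IH ?fullcycleE; last lia.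
by apply: val_inj; rewrite /= !inordK ?modn_small //; lia.
Qed.

Lemma porbits_fullcycle : #|porbits c| = 1.
Proof.
have one_orbit x : porbit c x = porbit c ord0.
  apply/eqP; rewrite eq_porbit_mem; apply/porbitP; exists x.
  rewrite fullcycleX_ord0; last exact: ltn_ord x.
  by apply: val_inj; rewrite /= inordK.
suff -> : porbits c = [set porbit c ord0] by apply: cards1.
apply/setP => S; rewrite inE; apply/imsetP/eqP => [[x _ ->]|->] //.
by exists ord0.
Qed.

Lemma fullcycleV_inord w : 0 < w <= m -> (c^-1)%g (inord w) = inord w.-1.
Proof.
move=> w_range; have <- : c (inord w.-1) = inord w.
  by rewrite fullcycleE; apply: val_inj; rewrite /= !inordK ?modn_small; lia.
by rewrite permK.
Qed.

Lemma inord_pred_neq i j : 1 <= i < j -> j <= n -> (inord i.-1 : 'I_n) != inord j.-1.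
Proof. by move=> ij jn; apply/eqP => /(congr1 val) /=; rewrite !inordK; lia. Qed.

(* Each transposition of a sorted non-interleaving chain joins two cycles. *)
Lemma porbits_prodT ts : all (is_transp n) ts ->
  pairwise (fun a b => a.1 <= b.1) ts -> pairwise outside ts ->
  #|porbits (prodT n ts)| + size ts = n.
Proof.
elim/last_ind: ts => [|ts [i j] IH]; first by rewrite /prodT /= porbits1 addn0.
rewrite all_rcons !pairwise_rcons size_rcons addnS prodT_rcons transpE /=.
move=> /andP[/andP[/andP[i1 ij] jn] allT] /andP[le_i srt] /andP[out nc].
rewrite /= in i1 ij jn.
have xy : (inord i.-1 : 'I_n) != inord j.-1 by rewrite inord_pred_neq ?i1.
have yfix : prodT n ts (inord j.-1) = inord j.-1.
  by apply: prodT_fix_interval allT le_i out _; rewrite inordK; lia.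
have x_off : inord i.-1 \notin porbit (prodT n ts) (inord j.-1).
  by apply/porbitP => -[r]; rewrite permX_fix // => /eqP; rewrite (negbTE xy).
have := porbits_mul_tperm (prodT n ts) (inord i.-1) (inord j.-1).
rewrite xy x_off /= addn2 addn1 => -[merge].
by rewrite -addSn merge IH.
Qed.

(* ... while it splits a cycle of the quotient by c, which starts as a
   single cycle: the arc (i, j] is traversed backwards from j to i. *)
Lemma porbits_prodT_cycle ts : all (is_transp n) ts ->
  pairwise (fun a b => a.1 <= b.1) ts -> pairwise outside ts ->
  #|porbits (prodT n ts * c^-1)| = (size ts).+1.
Proof.
elim/last_ind: ts => [|ts [i j] IH].
  by rewrite /prodT /= mul1g porbitsV porbits_fullcycle.
rewrite all_rcons !pairwise_rcons size_rcons prodT_rcons transpE /= -mulgA.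
move=> /andP[/andP[/andP[i1 ij] jn] allT] /andP[le_i srt] /andP[out nc].
rewrite /= in i1 ij jn.
have xy : (inord i.-1 : 'I_n) != inord j.-1 by rewrite inord_pred_neq ?i1.
set Q := (prodT n ts * c^-1)%g.
have Q_walk r : r <= j - i -> (Q ^+ r)%g (inord j.-1) = inord (j.-1 - r).
  elim: r => [|r IHr] r_le; first by rewrite expg0 perm1 subn0.
  rewrite expgSr permM IHr; last lia.
  rewrite /Q permM (prodT_fix_interval allT le_i out); last by rewrite inordK; lia.
  by rewrite fullcycleV_inord; [congr inord|]; lia.
have x_on : inord i.-1 \in porbit Q (inord j.-1).
  by apply/porbitP; exists (j - i); rewrite Q_walk //; congr inord; lia.
have := porbits_mul_tperm Q (inord i.-1) (inord j.-1).
by rewrite xy x_on /= addn0 => ->; rewrite IH // addn1.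
Qed.

End Cycles.

Lemma noncrossing_SigmaStar n ts : 0 < n -> all (is_transp n) ts ->
  sorted leq (map fst ts) -> pairwise outside ts -> SigmaStar n (size ts) ts.
Proof.
case: n => // m _ allT srt nc.
have le_fst : pairwise (fun a b => a.1 <= b.1) ts.
  by move: srt; rewrite sorted_pairwise ?pairwise_map //; apply: leq_trans.
have := porbits_prodT allT le_fst nc; have := porbits_gt0 (prodT m.+1 ts).
rewrite /SigmaStar /Sigma eqxx allT srt /pleq /plen porbits_fullcycle.
rewrite -(porbitsV (fullcycle m.+1 * _)) invMg invgK porbits_prodT_cycle // andbT /=.
set cycles := #|porbits (prodT m.+1 ts)| => cycles_gt0 cycles_size.
by apply/andP; split; apply/eqP; lia.
Qed.

Theorem lemma5p3 (n k : nat) (A B : seq nat) :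
  1 <= n -> 1 <= k ->
  size A = k -> all (in_range n) A ->
  uniq B -> size B = k.+1 -> all (in_range n) B ->
  let rho := residue n A B in
  let At := map (cshift n (n + 1 - rho)) A in
  let Bt := map (cshift n (n + 1 - rho)) B in
  let I := sort leq At in
  let J := Park n I Bt in
  (forall l, l < k -> nth 0 I l < nth 0 J l) /\ SigmaStar n k (zip I J).
Proof.
move=> n_gt0 _ sA rA uB sB rB rho At Bt I J.
have sBA : size B = (size A).+1 by rewrite sA sB.
have rho_one : cshift n (n + 1 - rho) rho = 1.
  by apply: cshift_to_one; apply: (allP rB); have [] := residue_spec n uB sBA.
have uBt : uniq Bt by apply: map_cshift_uniq.
have rBt : all (in_range n) Bt by apply: map_cshift_in_range.
have oneBt : 1 \in Bt by rewrite -rho_one; apply: map_f; have [] := residue_spec n uB sBA.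
have IAt : perm_eq I At by rewrite perm_sort.
have rI : all (in_range n) I by rewrite (perm_all _ IAt) map_cshift_in_range.
have free1 : 1 \notin J by rewrite /J -rho_one; apply: Park_avoids_residue.
have /andP[transps nc] := Park_noncrossing n_gt0 rI uBt rBt oneBt free1.
have sJ : size J = size I by rewrite size_Park.
have sIJ : size (zip I J) = k by rewrite size_zip sJ minnn size_sort size_map.
split => [l lk|].
  have := (all_nthP (0, 0) transps) l; rewrite sIJ nth_zip; last by rewrite sJ.
  by move=> /(_ lk) /andP[/andP[]].
rewrite -sIJ; apply: noncrossing_SigmaStar => //.
have -> : map fst (zip I J) = I by apply: unzip1_zip; rewrite sJ.
exact: sort_sorted leq_total _.
Qed.
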